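(* Let $\hat x^1,\hat x^2,\dots$ be the actions chosen by RBG($N$) with $N(\cdot)=\theta\|\cdot\|$, $\theta\ge1$, for any value of its random number $r\in(-1,1)$. Then for every $t\ge1$, $w^t(\hat x^{t+1})=w^{t-1}(\hat x^{t+1})+c^t(\hat x^{t+1})$.
   Context: The decision space $M=F\subseteq(\mathbb{R}^+)^n$ is convex and compact, $\|\cdot\|$ is a norm, and cost functions $c^t:F\to\mathbb{R}^+$ are convex. The work function is $w^0(x)=N(x)$ and $w^t(x)=\min_{y\in F}\{w^{t-1}(y)+c^t(y)+\theta\|x-y\|\}$. RBG($N$) draws $r$ uniformly from $(-1,1)$ and at each time $t$ chooses $\hat x^t\in F$ minimizing $Y^t(x)=w^{t-1}(x)+\theta r\|x\|$. *)

From HB Require Import structures.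
From mathcomp Require Import all_boot all_order all_algebra.
From mathcomp Require Import all_classical all_reals all_analysis.
Set Implicit Arguments. Unset Strict Implicit. Unset Printing Implicit Defensive.
Import Order.TTheory GRing.Theory Num.Theory.
Import numFieldNormedType.Exports.
Local Open Scope ring_scope.
Local Open Scope classical_set_scope.

Definition is_norm (R : realType) (n : nat) (nrm : 'rV[R]_n -> R) : Prop :=
  [/\ (forall x, 0 <= nrm x),
      (forall x, nrm x = 0 -> x = 0),
      (forall (a : R) x, nrm (a *: x) = `|a| * nrm x) &
      (forall x y, nrm (x + y) <= nrm x + nrm y)].

Definition in_nonneg_orthant (R : realType) (n : nat) (F : set 'rV[R]_n) : Prop :=
  forall x, F x -> forall i, 0 <= x 0 i.

Definition convex_subset (R : realType) (n : nat) (F : set 'rV[R]_n) : Prop :=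
  forall x y (l : R), F x -> F y -> 0 <= l <= 1 -> F (l *: x + (1 - l) *: y).

Definition convex_fun_on (R : realType) (n : nat) (F : set 'rV[R]_n)
  (f : 'rV[R]_n -> R) : Prop :=
  forall x y (l : R), F x -> F y -> 0 <= l <= 1 ->
    f (l *: x + (1 - l) *: y) <= l * f x + (1 - l) * f y.

(* w is the work function: w 0 = N on F and, for t >= 1 and x in F,
   w t x = min_{y in F} { w (t-1) y + c t y + theta * nrm (x - y) }
   (the minimum is attained and is a lower bound). *)
Definition is_work_function (R : realType) (n : nat) (F : set 'rV[R]_n)
  (nrm : 'rV[R]_n -> R) (theta : R) (N : 'rV[R]_n -> R)
  (c : nat -> 'rV[R]_n -> R) (w : nat -> 'rV[R]_n -> R) : Prop :=
  (forall x, F x -> w 0%N x = N x) /\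
  (forall t x, (1 <= t)%N -> F x ->
     (exists2 y, F y & w t x = w t.-1 y + c t y + theta * nrm (x - y)) /\
     (forall y, F y -> w t x <= w t.-1 y + c t y + theta * nrm (x - y))).

(* xh t (t >= 1) is the action chosen by RBG(N) with random number r:
   xh t in F minimizes Y^t(x) = w (t-1) x + theta * r * nrm x over F. *)
Definition is_RBG_actions (R : realType) (n : nat) (F : set 'rV[R]_n)
  (nrm : 'rV[R]_n -> R) (theta r : R) (w : nat -> 'rV[R]_n -> R)
  (xh : nat -> 'rV[R]_n) : Prop :=
  forall t, (1 <= t)%N ->
    F (xh t) /\
    (forall x, F x ->
       w t.-1 (xh t) + theta * r * nrm (xh t) <= w t.-1 x + theta * r * nrm x).

From HB Require Import structures.
From mathcomp Require Import all_boot all_order all_algebra.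
From mathcomp Require Import all_classical all_reals all_analysis.
From mathcomp Require Import lra.
Set Implicit Arguments. Unset Strict Implicit. Unset Printing Implicit Defensive.
Import Order.TTheory GRing.Theory Num.Theory.
Import numFieldNormedType.Exports.
Local Open Scope ring_scope.
Local Open Scope classical_set_scope.

(* Let x = xh (t+1) and let y attain the minimum defining w t x, so that
   w t x = w (t-1) y + c t y + theta |x - y| >= w t y + theta |x - y|.
   Optimality of x for Y^(t+1) gives w t x - w t y <= theta r (|y| - |x|)
   <= theta |r| |x - y|. As |r| < 1, |x - y| = 0, i.e. y = x, and the
   defining identity of w t x is the claim. *)

Section NormFacts.
Variables (R : realType) (n : nat) (nrm : 'rV[R]_n -> R).
Hypothesis nrmP : is_norm nrm.

Lemma norm0 : nrm 0 = 0.
Proof.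
by case: nrmP => _ _ nrmZ _; rewrite -(scale0r 0) nrmZ normr0 mul0r.
Qed.

Lemma normB_sym (x y : 'rV[R]_n) : nrm (x - y) = nrm (y - x).
Proof.
case: nrmP => _ _ nrmZ _.
by rewrite -opprB -scaleN1r nrmZ normrN normr1 mul1r.
Qed.

Lemma dist_norm_le (x y : 'rV[R]_n) : `|nrm x - nrm y| <= nrm (x - y).
Proof.
case: nrmP => _ _ _ nrmD.
have := nrmD y (x - y); rewrite addrC subrK => lex.
have := nrmD x (y - x); rewrite addrC subrK -normB_sym => ley.
by rewrite ler_norml; apply/andP; split; lra.
Qed.

End NormFacts.

Lemma eq0_of_le_contraction (R : realType) (d e r : R) :
  `|r| < 1 -> `|e| <= d -> d <= r * e -> d = 0.
Proof.
move=> r1 ed dre.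
have d0 : 0 <= d by apply: le_trans ed.
have : d <= `|r| * d.
  apply: (le_trans dre); apply: (le_trans (ler_norm _)).
  by rewrite normrM ler_wpM2l.
nra.
Qed.

Section WorkFunction.
Variables (R : realType) (n : nat) (F : set 'rV[R]_n) (nrm : 'rV[R]_n -> R).
Variables (theta : R) (N : 'rV[R]_n -> R).
Variables (c : nat -> 'rV[R]_n -> R) (w : nat -> 'rV[R]_n -> R).
Hypotheses (nrmP : is_norm nrm) (wP : is_work_function F nrm theta N c w).

Lemma work_function_le_step t x : (1 <= t)%N -> F x ->
  w t x <= w t.-1 x + c t x.
Proof.
move=> t1 Fx; have [_ /(_ x Fx)] := wP.2 t x t1 Fx.
by rewrite subrr norm0 // mulr0 addr0.
Qed.

Lemma work_function_argmin_gap t x : (1 <= t)%N -> F x ->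
  exists2 y, F y & w t x = w t.-1 y + c t y + theta * nrm (x - y) /\
                   w t y + theta * nrm (x - y) <= w t x.
Proof.
move=> t1 Fx; have [[y Fy wxy] _] := wP.2 t x t1 Fx.
exists y => //; split=> //.
by rewrite wxy lerD2r work_function_le_step.
Qed.

End WorkFunction.

Theorem lemma6 (R : realType) (n : nat) (F : set 'rV[R]_n)
  (nrm : 'rV[R]_n -> R) (theta r : R)
  (c : nat -> 'rV[R]_n -> R) (w : nat -> 'rV[R]_n -> R)
  (xh : nat -> 'rV[R]_n) :
  is_norm nrm ->
  in_nonneg_orthant F -> convex_subset F -> compact F -> F !=set0 ->
  (forall t, (1 <= t)%N -> forall x, F x -> 0 <= c t x) ->
  (forall t, (1 <= t)%N -> convex_fun_on F (c t)) ->
  1 <= theta ->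
  -1 < r < 1 ->
  is_work_function F nrm theta (fun x => theta * nrm x) c w ->
  is_RBG_actions F nrm theta r w xh ->
  forall t, (1 <= t)%N ->
    w t (xh t.+1) = w t.-1 (xh t.+1) + c t (xh t.+1).
Proof.
move=> nrmP _ _ _ _ _ _ theta1 r1 wP rbg t t1.
have [Fx xmin] := rbg t.+1 isT.
set x := xh t.+1 in Fx xmin *.
have [y Fy [wx gap]] := work_function_argmin_gap nrmP wP t1 Fx.
have rbg_opt := xmin y Fy.
have dxy0 : nrm (x - y) = 0.
  apply: (eq0_of_le_contraction (e := nrm y - nrm x) (r := r)).
  - by rewrite ltr_norml.
  - by rewrite normB_sym //; exact: dist_norm_le.
  - have theta0 : 0 < theta by apply: lt_le_trans theta1.
    rewrite -(ler_pM2l theta0) mulrA mulrBr.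
    by rewrite /= in rbg_opt; lra.
have [_ nrm_eq0 _ _] := nrmP.
have /eqP := nrm_eq0 _ dxy0; rewrite subr_eq0 => /eqP exy.
by rewrite wx dxy0 mulr0 addr0 -exy.
Qed.
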